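(* In any packing produced by the algorithm OnlinePacker (described in the context), there are at most two near-empty boxes of each box type.
   Context: Setting: online translational strip packing. The strip is a horizontal strip of height 1, bounded on the left by a vertical segment and unbounded to the right. Pieces arrive one at a time, each must be placed by a translation only, interior-disjoint from previously placed pieces, before the next piece is revealed. Here all pieces are horizontal parallelograms (parallelograms with a pair of horizontal edges, the base edges) of height 1 and width at most 1. Box types: these form an infinite ternary tree. The root, the basic box type, is a 2 x 1 rectangle. A d-dimensional box type is a vector [x_1,...,x_d] in {-1,0,+1}^d and is a horizontal parallelogram of height 1. Given type T = [x_1,...,x_d] with bottom edge b and top edge t, split b into three equal consecutive segments b_{-1}, b_0, b_{+1} (left to right) and t likewise into t_{-1}, t_0, t_{+1}; the child type T ⊕ [x_{d+1}] = [x_1,...,x_d,x_{d+1}] is the parallelogram spanned by b_0 and t_{x_{d+1}}. Thus a d-dimensional type has base edges of length 2·3^{-d}. A box type T matches a piece P if P can be packed into T and area(T) ≤ 6·area(P) (such a type exists for every such P). A type is suitable for P if it is an ancestor (including itself) in the tree of a type matching P. Algorithm OnlinePacker: space in the strip is allocated for boxes of the various types; each box of type T contains either a single piece that T matches, or one, two or three boxes whose types are children of T. When a piece P arrives: if there exists an allocated box B_1 whose type T_1 is suitable for P (with T_1,...,T_k the tree path from T_1 to a type T_k matching P) and B_1 has room for one more box of type T_2, choose such a B_1 as small as possible (maximum dimension); then for i = 1,...,k-1 allocate in B_i a new empty box B_{i+1} of type T_{i+1} placed as far left in B_i as possible, and finally place P in B_k. If no such B_1 exists, allocate a new box of the basic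 type as far left in the strip as possible (not overlapping already allocated boxes), call it B_1, and proceed the same way. A d-dimensional box is near-empty if exactly one (d+1)-dimensional box is allocated in it. *)

From Stdlib Require Import Reals List.
Import ListNotations.
Open Scope R_scope.

(* A horizontal parallelogram of height 1 lying in the strip (height 1 *)
(* forces y in [0,1]) is described by the x-coordinate [a] of its      *)
(* bottom-left corner, the length [l] of its base edges, and its shear *)
(* [s] = (x of top-left corner) - (x of bottom-left corner).           *)

Definition region := (R * R) -> Prop.

Definition para (a l s : R) : region :=
  fun p => 0 <= snd p <= 1 /\ a + s * snd p <= fst p <= a + s * snd p + l.

Definition ipara (a l s : R) : region :=
  fun p => 0 < snd p < 1 /\ a + s * snd p < fst p < a + s * snd p + l.

Definition strip : region := fun p => 0 <= fst p /\ 0 <= snd p <= 1.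

Definition rsubset (A B : region) : Prop := forall p, A p -> B p.
Definition rdisjoint (A B : region) : Prop := forall p, ~ (A p /\ B p).

(* Width = horizontal extent = base length + |shear|.                  *)

Record piece := Piece { pl : R ; psh : R }.

Definition valid_piece (P : piece) : Prop :=
  0 < pl P /\ pl P + Rabs (psh P) <= 1.

(* area of a height-1 parallelogram = base length *)
Definition piece_area (P : piece) : R := pl P.

(* Box types: vectors in {-1,0,+1}^d, i.e. paths from the root of the  *)
(* ternary tree.  [x_1; ...; x_d] lists the coordinates from the root. *)

Inductive dir := DMinus | DZero | DPlus.

Definition dval (x : dir) : R :=
  match x with DMinus => -1 | DZero => 0 | DPlus => 1 end.

Definition dir_eq_dec (x y : dir) : {x = y} + {x <> y}.
Proof. decide equality. Defined.

Definition btype := list dir.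

(* Shape (base length, shear) of a type.  If T has base length w and   *)
(* shear s, with bottom edge starting at b and top edge at b + s, then *)
(* the child T (+) [x] is spanned by b_0 = [b + w/3, b + 2w/3] and      *)
(* t_x = [b + s + (x+1) w/3, b + s + (x+2) w/3]: base w/3, shear        *)
(* s + x w/3.  The root (basic type) is the 2 x 1 rectangle.           *)
Fixpoint shape_aux (l s : R) (T : btype) : R * R :=
  match T with
  | nil => (l, s)
  | x :: T' => shape_aux (l / 3) (s + dval x * (l / 3)) T'
  end.

Definition shape (T : btype) : R * R := shape_aux 2 0 T.
Definition type_len (T : btype) : R := fst (shape T).
Definition type_shear (T : btype) : R := snd (shape T).
Definition type_area (T : btype) : R := type_len T.

Definition packs_into (P : piece) (T : btype) : Prop :=
  exists u, rsubset (para u (pl P) (psh P)) (para 0 (type_len T) (type_shear T)).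

Definition matches (T : btype) (P : piece) : Prop :=
  packs_into P T /\ type_area T <= 6 * piece_area P.

Definition suitable (T : btype) (P : piece) : Prop :=
  exists ext, matches (T ++ ext) P.

(* Allocated boxes are stored in a list; a box's identity is its index *)
(* in that list.  [bparent] is the index of the box it was allocated   *)
(* in (None for boxes of the basic type allocated in the strip).       *)

Record box := Box { btyp : btype ; bpos : R ; bparent : option nat }.

Record placed := Placed { ppiece : piece ; ppos : R ; pbox : nat }.

Record state := State { boxes : list box ; pieces : list placed }.

Definition init_state : state := State nil nil.

Definition dummy_box : box := Box nil 0 None.

Definition box_at (st : state) (i : nat) : box := nth i (boxes st) dummy_box.

Definition box_region (b : box) : region :=
  para (bpos b) (type_len (btyp b)) (type_shear (btyp b)).
Definition box_interior (b : box) : region :=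
  ipara (bpos b) (type_len (btyp b)) (type_shear (btyp b)).

Definition type_region (T : btype) (x : R) : region :=
  para x (type_len T) (type_shear T).
Definition type_interior (T : btype) (x : R) : region :=
  ipara x (type_len T) (type_shear T).

Definition is_child_of (i : nat) (b : box) : bool :=
  match bparent b with Some p => Nat.eqb p i | None => false end.

Definition nchildren (st : state) (i : nat) : nat :=
  length (filter (is_child_of i) (boxes st)).

Definition no_piece_in (st : state) (i : nat) : Prop :=
  forall q, In q (pieces st) -> pbox q <> i.

Definition room_at (st : state) (i : nat) (T : btype) (x : R) : Prop :=
  rsubset (type_region T x) (box_region (box_at st i)) /\
  forall b, In b (boxes st) -> is_child_of i b = true ->
    rdisjoint (type_interior T x) (box_interior b).

Definition leftmost_in_box (st : state) (i : nat) (T : btype) (x : R) : Prop :=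
  room_at st i T x /\ forall y, room_at st i T y -> x <= y.

Definition strip_room (st : state) (x : R) : Prop :=
  rsubset (type_region nil x) strip /\
  forall b, In b (boxes st) -> rdisjoint (type_interior nil x) (box_interior b).

Definition leftmost_in_strip (st : state) (x : R) : Prop :=
  strip_room st x /\ forall y, strip_room st y -> x <= y.

Definition add_box (st : state) (b : box) : state :=
  State (boxes st ++ [b]) (pieces st).

Definition add_piece (st : state) (q : placed) : state :=
  State (boxes st) (pieces st ++ [q]).

(* [chain st i ext st' j]: starting in box B_i = box i, successively     *)
(* allocate B_{i+1} of type T_i (+) [x] as far left as possible in B_i,  *)
(* for x ranging over ext; j is the index of the last box B_k.          *)
Inductive chain : state -> nat -> list dir -> state -> nat -> Prop :=
  | chain_nil st i : chain st i nil st i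
  | chain_cons st i d ext x st' j :
      leftmost_in_box st i (btyp (box_at st i) ++ [d]) x ->
      chain (add_box st (Box (btyp (box_at st i) ++ [d]) x (Some i)))
            (length (boxes st)) ext st' j ->
      chain st i (d :: ext) st' j.

(* Allocated box i (of type T_1) is an eligible B_1 for P, with tree path *)
(* T_1, T_2 = T_1 (+) [d], ..., T_k = T_1 ++ d :: ext matching P, and    *)
(* B_1 has room for one more box of type T_2.                           *)
Definition candidate (st : state) (P : piece) (i : nat) (d : dir) (ext : list dir) : Prop :=
  (i < length (boxes st))%nat /\
  no_piece_in st i /\
  matches (btyp (box_at st i) ++ d :: ext) P /\
  exists x, room_at st i (btyp (box_at st i) ++ [d]) x.

Definition piece_fits (st : state) (P : piece) (j : nat) (u : R) : Prop :=
  rsubset (para u (pl P) (psh P)) (box_region (box_at st j)).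

(* One step of OnlinePacker on piece P (all admissible choices). *)
Inductive step (st : state) (P : piece) : state -> Prop :=
  | step_existing i d ext st' j u :
      candidate st P i d ext ->
      (* B_1 as small as possible: maximum dimension among candidates *)
      (forall i' d' ext', candidate st P i' d' ext' ->
         (length (btyp (box_at st i')) <= length (btyp (box_at st i)))%nat) ->
      chain st i (d :: ext) st' j ->
      piece_fits st' P j u ->
      step st P (add_piece st' (Placed P u j))
  | step_new x ext st' j u :
      (forall i d ext', ~ candidate st P i d ext') ->
      leftmost_in_strip st x ->
      matches ext P ->
      chain (add_box st (Box nil x None)) (length (boxes st)) ext st' j ->
      piece_fits st' P j u ->
      step st P (add_piece st' (Placed P u j)).

Inductive reachable : state -> Prop :=
  | reach_init : reachable init_state
  | reach_step st P st' : reachable st -> valid_piece P -> step st P st' -> reachable st'.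

Definition near_empty (st : state) (i : nat) : Prop := nchildren st i = 1%nat.

From Stdlib Require Import Reals List Lra Lia Psatz.
Import ListNotations.
Open Scope R_scope.

(* A near-empty box of type T holds a single child, of type T ++ [c] for some
   direction c, and since children are allocated as far left as possible this
   child occupies the leftmost slot of direction c.  A box of type T that is
   still empty only receives its first child, of type T ++ [d], while OnlinePacker
   walks down a tree path from the chosen box B_1; any other box of type T that
   already has a child holds no piece, so if it had room for T ++ [d] it would
   have been a candidate of larger dimension than B_1.  But a near-empty box
   whose child has direction c has room for a T ++ [d] box at its right end
   unless {c, d} = {-1, +1}.  Hence the child directions of distinct near-empty
   boxes of the same type are pairwise opposite, which is impossible for three
   boxes. *)

Local Notation typ st i := (btyp (box_at st i)).
Local Notation pos st i := (bpos (box_at st i)).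
Local Notation width st i := (type_len (typ st i)).

Lemma shape_aux_snoc T d : forall l s,
  shape_aux l s (T ++ [d]) =
  (fst (shape_aux l s T) / 3,
   snd (shape_aux l s T) + dval d * (fst (shape_aux l s T) / 3)).
Proof. induction T as [|x T IH]; intros l s; simpl; [reflexivity | apply IH]. Qed.

Lemma type_len_snoc T d : type_len (T ++ [d]) = type_len T / 3.
Proof. unfold type_len, shape. rewrite shape_aux_snoc. reflexivity. Qed.

Lemma type_shear_snoc T d :
  type_shear (T ++ [d]) = type_shear T + dval d * (type_len T / 3).
Proof. unfold type_len, type_shear, shape. rewrite shape_aux_snoc. reflexivity. Qed.

Lemma type_len_pos T : 0 < type_len T.
Proof.
  assert (H : forall l s, 0 < l -> 0 < fst (shape_aux l s T)).
  { induction T as [|x T IH]; intros l s Hl; simpl; [exact Hl | apply IH; lra]. }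
  apply H; lra.
Qed.

Lemma snoc_inj (T : btype) c d : T ++ [c] = T ++ [d] -> c = d.
Proof. intros H; apply app_inv_head in H; congruence. Qed.

(* Both parallelograms have their base edges at heights 0 and 1, so comparing
   the edges at those heights suffices by convexity. *)
Lemma para_sub_of_edges a l s a' l' s' :
  a <= a' -> a' + l' <= a + l -> a + s <= a' + s' -> a' + s' + l' <= a + s + l ->
  rsubset (para a' l' s') (para a l s).
Proof.
  intros Hbl Hbr Htl Htr [x y]; unfold para; simpl; intros [Hy Hx]; split; [exact Hy |].
  assert (0 <= (1 - y) * (a' - a)) by (apply Rmult_le_pos; lra).
  assert (0 <= y * (a' + s' - (a + s))) by (apply Rmult_le_pos; lra).
  assert (0 <= (1 - y) * (a + l - (a' + l'))) by (apply Rmult_le_pos; lra).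
  assert (0 <= y * (a + s + l - (a' + s' + l'))) by (apply Rmult_le_pos; lra).
  split; nra.
Qed.

Lemma para_sub_left_edges_le a l s a' l' s' : 0 <= l' ->
  rsubset (para a' l' s') (para a l s) -> a <= a' /\ a + s <= a' + s'.
Proof.
  intros Hl' Hsub.
  destruct (Hsub (a', 0)) as [_ H0]; [unfold para; simpl; split; lra |].
  destruct (Hsub (a' + s', 1)) as [_ H1]; [unfold para; simpl; split; lra |].
  simpl in *; lra.
Qed.

Lemma ipara_disjoint_of_edges a l s a' l' s' :
  a' + l' <= a -> a' + s' + l' <= a + s -> rdisjoint (ipara a l s) (ipara a' l' s').
Proof.
  intros Hb Ht [x y]; unfold ipara; simpl; intros [[Hy Hx] [_ Hx']].
  assert (0 <= (1 - y) * (a - (a' + l'))) by (apply Rmult_le_pos; lra).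
  assert (0 <= y * (a + s - (a' + s' + l'))) by (apply Rmult_le_pos; lra).
  nra.
Qed.

(** * Child slots *)

Definition leftmost_offset (d : dir) (w : R) : R :=
  match d with DMinus => w / 3 | _ => 0 end.

Definition rightmost_offset (d : dir) (w : R) : R :=
  match d with DPlus => w / 3 | _ => 2 * w / 3 end.

Definition opposite (c d : dir) : Prop :=
  match c, d with DMinus, DPlus | DPlus, DMinus => True | _, _ => False end.

Lemma opposite_dec c d : opposite c d \/ ~ opposite c d.
Proof. destruct c, d; simpl; tauto. Qed.

Lemma opposite_sym c d : opposite c d -> opposite d c.
Proof. destruct c, d; simpl; tauto. Qed.

Lemma not_pairwise_opposite3 a b c :
  opposite a b -> opposite a c -> opposite b c -> False.
Proof. destruct a, b, c; simpl; tauto. Qed.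

Lemma child_leftmost_sub T d x :
  rsubset (type_region (T ++ [d]) (x + leftmost_offset d (type_len T)))
          (type_region T x).
Proof.
  unfold type_region; rewrite type_len_snoc, type_shear_snoc.
  pose proof (type_len_pos T); apply para_sub_of_edges; destruct d; simpl; lra.
Qed.

Lemma child_rightmost_sub T d x :
  rsubset (type_region (T ++ [d]) (x + rightmost_offset d (type_len T)))
          (type_region T x).
Proof.
  unfold type_region; rewrite type_len_snoc, type_shear_snoc.
  pose proof (type_len_pos T); apply para_sub_of_edges; destruct d; simpl; lra.
Qed.

Lemma child_slots_disjoint T c d x : ~ opposite c d ->
  rdisjoint (type_interior (T ++ [d]) (x + rightmost_offset d (type_len T)))
            (type_interior (T ++ [c]) (x + leftmost_offset c (type_len T))).
Proof.
  intros Hcd; unfold type_interior; rewrite !type_len_snoc, !type_shear_snoc.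
  pose proof (type_len_pos T); apply ipara_disjoint_of_edges;
    destruct c, d; simpl in *; try tauto; lra.
Qed.

Lemma leftmost_offset_le T d x y :
  rsubset (type_region (T ++ [d]) y) (type_region T x) ->
  x + leftmost_offset d (type_len T) <= y.
Proof.
  unfold type_region; rewrite type_len_snoc, type_shear_snoc; intros Hsub.
  pose proof (type_len_pos T).
  apply para_sub_left_edges_le in Hsub; [| lra].
  destruct d; simpl in *; lra.
Qed.

(** * Children of an allocated box *)

Definition has_child (st : state) (i : nat) : Prop :=
  exists b, In b (boxes st) /\ bparent b = Some i.

Definition child_dir (st : state) (i : nat) (c : dir) : Prop :=
  exists b, In b (boxes st) /\ bparent b = Some i /\ btyp b = typ st i ++ [c].

Lemma is_child_of_true i b : is_child_of i b = true <-> bparent b = Some i.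
Proof.
  unfold is_child_of; destruct (bparent b) as [p |]; [| split; discriminate].
  rewrite Nat.eqb_eq; split; congruence.
Qed.

Lemma in_children st i b :
  In b (filter (is_child_of i) (boxes st)) <-> In b (boxes st) /\ bparent b = Some i.
Proof. rewrite filter_In, is_child_of_true; reflexivity. Qed.

Lemma has_child_nchildren st i : has_child st i <-> (0 < nchildren st i)%nat.
Proof.
  unfold has_child, nchildren; split.
  - intros [b Hb]; apply in_children in Hb.
    destruct (filter _ _); simpl in *; [contradiction | lia].
  - destruct (filter (is_child_of i) (boxes st)) as [| b l] eqn:E; simpl; [lia |].
    intros _; exists b; apply in_children; rewrite E; left; reflexivity.
Qed.

Lemma near_empty_has_child st i : near_empty st i -> has_child st i.
Proof. unfold near_empty; rewrite has_child_nchildren; lia. Qed.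

Lemma near_empty_child_unique st i b b' : near_empty st i ->
  In b (boxes st) -> bparent b = Some i ->
  In b' (boxes st) -> bparent b' = Some i -> b = b'.
Proof.
  unfold near_empty, nchildren; intros H1 Hb Hpb Hb' Hpb'.
  assert (Hc : In b (filter (is_child_of i) (boxes st))) by (apply in_children; auto).
  assert (Hc' : In b' (filter (is_child_of i) (boxes st))) by (apply in_children; auto).
  destruct (filter _ _) as [| z [| z' l]]; simpl in *; try lia.
  intuition congruence.
Qed.

Lemma in_add_box St b b' : In b' (boxes (add_box St b)) <-> In b' (boxes St) \/ b' = b.
Proof. simpl; rewrite in_app_iff; simpl; intuition. Qed.

Lemma length_add_box St b : length (boxes (add_box St b)) = S (length (boxes St)).
Proof. simpl; rewrite length_app; simpl; lia. Qed.

Lemma box_at_extends St St' L k : boxes St' = boxes St ++ L ->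
  (k < length (boxes St))%nat -> box_at St' k = box_at St k.
Proof. intros E Hk; unfold box_at; rewrite E; apply app_nth1; exact Hk. Qed.

Lemma box_at_add_box_old St b k : (k < length (boxes St))%nat ->
  box_at (add_box St b) k = box_at St k.
Proof. apply box_at_extends with [b]; reflexivity. Qed.

Lemma box_at_add_box_new St b : box_at (add_box St b) (length (boxes St)) = b.
Proof. unfold box_at; simpl; rewrite app_nth2, Nat.sub_diag by lia; reflexivity. Qed.

Lemma nchildren_add_box St b k : nchildren (add_box St b) k =
  (nchildren St k + if is_child_of k b then 1 else 0)%nat.
Proof.
  unfold nchildren; simpl; rewrite filter_app, length_app; simpl.
  destruct (is_child_of k b); simpl; lia.
Qed.

Lemma has_child_extends St St' L k : boxes St' = boxes St ++ L ->
  has_child St k -> has_child St' k.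
Proof. intros E [b [Hb Hpb]]; exists b; rewrite E, in_app_iff; auto. Qed.

Lemma child_add_box_other St nb b k : In b (boxes (add_box St nb)) ->
  bparent b = Some k -> bparent nb <> Some k -> In b (boxes St).
Proof. intros Hb Hpb Hnb; apply in_add_box in Hb as [Hb | ->]; congruence. Qed.

Lemma child_dir_add_box_other St nb k c : (k < length (boxes St))%nat ->
  bparent nb <> Some k -> child_dir (add_box St nb) k c -> child_dir St k c.
Proof.
  intros Hk Hnb [b [Hb [Hpb Htb]]]; exists b.
  rewrite box_at_add_box_old in Htb by exact Hk.
  split; [exact (child_add_box_other St nb b k Hb Hpb Hnb) | auto].
Qed.

Lemma near_empty_add_box_other St nb k : bparent nb <> Some k ->
  near_empty (add_box St nb) k <-> near_empty St k.
Proof.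
  intros Hnb; unfold near_empty; rewrite nchildren_add_box.
  destruct (is_child_of k nb) eqn:E; [apply is_child_of_true in E; contradiction |].
  rewrite Nat.add_0_r; reflexivity.
Qed.

Lemma near_empty_add_box_parent St nb k : bparent nb = Some k ->
  near_empty (add_box St nb) k -> ~ has_child St k.
Proof.
  intros Hnb; unfold near_empty; rewrite nchildren_add_box, has_child_nchildren.
  replace (is_child_of k nb) with true by (symmetry; apply is_child_of_true; exact Hnb).
  lia.
Qed.

Lemma room_at_extends St St' L i T y : boxes St' = boxes St ++ L ->
  (i < length (boxes St))%nat -> room_at St' i T y -> room_at St i T y.
Proof.
  intros E Hi [Hsub Hdisj]; unfold room_at.
  rewrite <- (box_at_extends St St' L i E Hi); split; [exact Hsub |].
  intros b Hb; apply Hdisj; rewrite E, in_app_iff; auto.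
Qed.

Lemma room_in_empty_box St i d : ~ has_child St i ->
  room_at St i (typ St i ++ [d]) (pos St i + leftmost_offset d (width St i)).
Proof.
  intros Hno; split; [apply child_leftmost_sub |].
  intros b Hb Hpb; apply is_child_of_true in Hpb; exfalso; apply Hno; exists b; auto.
Qed.

Lemma leftmost_in_empty_box St i d x : ~ has_child St i ->
  leftmost_in_box St i (typ St i ++ [d]) x ->
  x = pos St i + leftmost_offset d (width St i).
Proof.
  intros Hno [[Hsub _] Hmin].
  pose proof (Hmin _ (room_in_empty_box St i d Hno)).
  pose proof (leftmost_offset_le _ _ _ _ Hsub); lra.
Qed.

Lemma room_beside_only_child St i b c d : near_empty St i ->
  In b (boxes St) -> bparent b = Some i -> btyp b = typ St i ++ [c] ->
  bpos b = pos St i + leftmost_offset c (width St i) -> ~ opposite c d ->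
  room_at St i (typ St i ++ [d]) (pos St i + rightmost_offset d (width St i)).
Proof.
  intros Hne Hb Hpb Htb Hposb Hcd; split; [apply child_rightmost_sub |].
  intros b' Hb' Hpb'; apply is_child_of_true in Hpb'.
  rewrite (near_empty_child_unique St i b' b Hne Hb' Hpb' Hb Hpb).
  unfold box_interior; rewrite Htb, Hposb; apply child_slots_disjoint, Hcd.
Qed.

(** * Invariants of the box tree *)

Record tree_inv (st : state) : Prop := {
  parent_lt : forall b p, In b (boxes st) -> bparent b = Some p ->
    (p < length (boxes st))%nat;
  child_typ : forall b p, In b (boxes st) -> bparent b = Some p ->
    exists c, btyp b = typ st p ++ [c];
  only_child_leftmost : forall i b c, near_empty st i ->
    In b (boxes st) -> bparent b = Some i -> btyp b = typ st i ++ [c] ->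
    bpos b = pos st i + leftmost_offset c (width st i);
  near_empty_opposite : forall i j ci cj, i <> j -> typ st i = typ st j ->
    near_empty st i -> near_empty st j -> child_dir st i ci -> child_dir st j cj ->
    opposite ci cj
}.

Lemma near_empty_child_dir st i : tree_inv st -> near_empty st i ->
  exists c, child_dir st i c.
Proof.
  intros Ht Hne; destruct (near_empty_has_child st i Hne) as [b [Hb Hpb]].
  destruct (child_typ st Ht b i Hb Hpb) as [c Hc]; exists c, b; auto.
Qed.

Lemma near_empty_lt st i : tree_inv st -> near_empty st i -> (i < length (boxes st))%nat.
Proof.
  intros Ht Hne; destruct (near_empty_has_child st i Hne) as [b [Hb Hpb]].
  exact (parent_lt st Ht b i Hb Hpb).
Qed.

Lemma opposite_of_no_room St j c d : tree_inv St -> near_empty St j -> child_dir St j c ->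
  ~ (exists y, room_at St j (typ St j ++ [d]) y) -> opposite c d.
Proof.
  intros Ht Hne [b [Hb [Hpb Htb]]] Hno.
  destruct (opposite_dec c d) as [| Hcd]; [assumption | exfalso; apply Hno].
  eexists; apply (room_beside_only_child St j b c d); auto.
  apply (only_child_leftmost St Ht); auto.
Qed.

Lemma tree_inv_init : tree_inv init_state.
Proof.
  split; simpl; try contradiction; intros i; discriminate.
Qed.

Lemma tree_inv_add_root St r : bparent r = None -> tree_inv St -> tree_inv (add_box St r).
Proof.
  intros Hr Ht.
  assert (Hnr : forall k, bparent r <> Some k) by congruence.
  assert (Hold : forall b p, In b (boxes (add_box St r)) -> bparent b = Some p ->
            In b (boxes St) /\ (p < length (boxes St))%nat).
  { intros b p Hb Hpb; pose proof (child_add_box_other St r b p Hb Hpb (Hnr p)).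
    split; [assumption | exact (parent_lt St Ht b p ltac:(assumption) Hpb)]. }
  split.
  - intros b p Hb Hpb; rewrite length_add_box; apply Hold in Hpb as [_ Hp]; auto.
  - intros b p Hb Hpb; destruct (Hold b p Hb Hpb) as [Hb' Hp].
    rewrite box_at_add_box_old by exact Hp; exact (child_typ St Ht b p Hb' Hpb).
  - intros i b c Hi Hb Hpb; destruct (Hold b i Hb Hpb) as [Hb' Hp].
    apply near_empty_add_box_other in Hi; [| apply Hnr].
    rewrite !box_at_add_box_old by exact Hp.
    exact (only_child_leftmost St Ht i b c Hi Hb' Hpb).
  - intros i j ci cj Hij Htyp Hi Hj Hci Hcj.
    apply near_empty_add_box_other in Hi, Hj; try apply Hnr.
    pose proof (near_empty_lt St i Ht Hi); pose proof (near_empty_lt St j Ht Hj).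
    rewrite !box_at_add_box_old in Htyp by assumption.
    apply (near_empty_opposite St Ht i j); auto;
      eapply child_dir_add_box_other; eauto.
Qed.

Section AddChild.

Variables (St : state) (i : nat) (d : dir) (x : R).
Hypothesis Ht : tree_inv St.
Hypothesis Hi : (i < length (boxes St))%nat.
Hypothesis Hleft : leftmost_in_box St i (typ St i ++ [d]) x.
Hypothesis Hroom : ~ has_child St i ->
  forall j, j <> i -> typ St j = typ St i -> near_empty St j ->
  ~ exists y, room_at St j (typ St i ++ [d]) y.

Local Notation nb := (Box (typ St i ++ [d]) x (Some i)).

Lemma add_child_parent_lt b p : In b (boxes (add_box St nb)) -> bparent b = Some p ->
  (p < length (boxes St))%nat.
Proof.
  intros Hb Hpb; apply in_add_box in Hb as [Hb | ->];
    [exact (parent_lt St Ht b p Hb Hpb) | injection Hpb as <-; exact Hi].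
Qed.

Lemma add_child_near_empty_lt k : near_empty (add_box St nb) k ->
  (k < length (boxes St))%nat.
Proof.
  intros Hk; destruct (near_empty_has_child _ _ Hk) as [b [Hb Hpb]].
  exact (add_child_parent_lt b k Hb Hpb).
Qed.

Lemma add_child_first b c : ~ has_child St i -> In b (boxes (add_box St nb)) ->
  bparent b = Some i -> btyp b = typ St i ++ [c] -> b = nb /\ c = d.
Proof.
  intros Hno Hb Hpb Htb; apply in_add_box in Hb as [Hb | ->].
  - exfalso; apply Hno; exists b; auto.
  - split; [reflexivity | symmetry; exact (snoc_inj _ _ _ Htb)].
Qed.

Lemma add_child_first_opposite j c cj : j <> i -> typ St j = typ St i ->
  near_empty (add_box St nb) i -> near_empty (add_box St nb) j ->
  child_dir (add_box St nb) i c -> child_dir (add_box St nb) j cj -> opposite cj c.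
Proof.
  intros Hji Htyp Hni Hnj [b [Hb [Hpb Htb]]] Hcj.
  apply near_empty_add_box_parent in Hni; [| reflexivity].
  rewrite box_at_add_box_old in Htb by exact Hi.
  destruct (add_child_first b c Hni Hb Hpb Htb) as [_ ->].
  apply near_empty_add_box_other in Hnj; [| simpl; congruence].
  apply (opposite_of_no_room St j); [assumption | assumption | |].
  - apply (child_dir_add_box_other St nb); [exact (near_empty_lt St j Ht Hnj) | simpl; congruence |].
    exact Hcj.
  - rewrite Htyp; apply Hroom; assumption.
Qed.

Lemma tree_inv_add_child : tree_inv (add_box St nb).
Proof.
  split.
  - intros b p Hb Hpb; rewrite length_add_box.
    pose proof (add_child_parent_lt b p Hb Hpb); lia.
  - intros b p Hb Hpb; rewrite box_at_add_box_old by exact (add_child_parent_lt b p Hb Hpb).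
    apply in_add_box in Hb as [Hb | ->]; [exact (child_typ St Ht b p Hb Hpb) |].
    injection Hpb as <-; exists d; reflexivity.
  - intros k b c Hk Hb Hpb Htb; pose proof (add_child_near_empty_lt k Hk).
    rewrite box_at_add_box_old in * by assumption.
    destruct (Nat.eq_dec k i) as [-> | Hki].
    + apply near_empty_add_box_parent in Hk; [| reflexivity].
      destruct (add_child_first b c Hk Hb Hpb Htb) as [-> ->].
      exact (leftmost_in_empty_box St i d x Hk Hleft).
    + apply near_empty_add_box_other in Hk; [| simpl; congruence].
      apply (only_child_leftmost St Ht); auto.
      apply (child_add_box_other St nb b k Hb Hpb); simpl; congruence.
  - intros k j ck cj Hkj Htyp Hk Hj Hck Hcj.
    pose proof (add_child_near_empty_lt k Hk); pose proof (add_child_near_empty_lt j Hj).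
    rewrite !box_at_add_box_old in Htyp by assumption.
    destruct (Nat.eq_dec k i) as [-> | Hki];
      [apply opposite_sym, (add_child_first_opposite j); auto |].
    destruct (Nat.eq_dec j i) as [-> | Hji]; [apply (add_child_first_opposite k); auto |].
    apply near_empty_add_box_other in Hk, Hj; try (simpl; congruence).
    apply (near_empty_opposite St Ht k j); auto;
      eapply child_dir_add_box_other; eauto; simpl; congruence.
Qed.

End AddChild.

(** * Steps of OnlinePacker *)

Definition dim (st : state) (i : nat) : nat := length (typ st i).

Record packing_inv (st : state) : Prop := {
  pi_tree : tree_inv st;
  pi_no_piece_iff : forall k, (k < length (boxes st))%nat ->
    no_piece_in st k <-> has_child st k;
  pi_piece_box : forall q, In q (pieces st) -> (pbox q < length (boxes st))%nat
}.

Lemma no_piece_in_add_piece St q k :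
  no_piece_in (add_piece St q) k <-> no_piece_in St k /\ pbox q <> k.
Proof.
  unfold no_piece_in; simpl; split.
  - intros H; split; [intros q' Hq'; apply H, in_app_iff; auto |].
    apply H, in_app_iff; simpl; auto.
  - intros [H Hq] q' Hq'; apply in_app_iff in Hq' as [Hq' | [<- | []]]; auto.
Qed.

Lemma tree_inv_add_piece St q : tree_inv St -> tree_inv (add_piece St q).
Proof. intros []; split; assumption. Qed.

Section Allocation.

Variables (st0 : state) (P : piece).
Hypothesis Hst0 : packing_inv st0.
Local Notation n0 := (length (boxes st0)).

(* Midway through a step from [st0]: the boxes of index >= [n0] are those
   allocated so far in the step, B_2, ..., B_m (from B_1 on if B_1 is a new basic
   box); [i] is B_m and [ext] the rest of the tree path to a type matching P. *)
Record chain_inv (St : state) (i : nat) (ext : list dir) : Prop := {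
  ci_tree : tree_inv St;
  ci_extends : exists L, boxes St = boxes st0 ++ L;
  ci_pieces : pieces St = pieces st0;
  ci_old_parent : forall k, (k < n0)%nat -> has_child St k -> no_piece_in st0 k;
  ci_fresh : (n0 <= i < length (boxes St))%nat;
  ci_empty : ~ has_child St i;
  ci_fresh_parent : forall k, (n0 <= k < length (boxes St))%nat -> k <> i -> has_child St k;
  ci_fresh_dim : forall k, (n0 <= k < length (boxes St))%nat -> k <> i ->
    (dim St k < dim St i)%nat;
  ci_candidate_dim : forall k d e, candidate st0 P k d e -> (dim st0 k < dim St i)%nat;
  ci_matches : matches (typ St i ++ ext) P
}.

(* A box of the same type as B_m with a child and room for T_{m+1} would have
   been a candidate B_1 of larger dimension than the chosen one. *)
Lemma chain_inv_no_room St i d ext : chain_inv St i (d :: ext) ->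
  forall j, j <> i -> typ St j = typ St i -> has_child St j ->
  ~ exists y, room_at St j (typ St i ++ [d]) y.
Proof.
  intros C j Hji Htyp Hj [y Hy].
  destruct C as [Ht [L HL] _ Hold [Hi0 Hi] _ _ Hdim Hcand Hm].
  assert (Hjlt : (j < length (boxes St))%nat)
    by (destruct Hj as [b [Hb Hpb]]; exact (parent_lt St Ht b j Hb Hpb)).
  destruct (Nat.lt_ge_cases j n0) as [Hj0 | Hj0].
  - pose proof (box_at_extends st0 St L j HL Hj0) as Hbox.
    assert (Hc : candidate st0 P j d ext).
    { split; [exact Hj0 | split; [apply Hold; assumption | split]].
      - rewrite <- Hbox, Htyp; exact Hm.
      - exists y; rewrite <- Hbox, Htyp; exact (room_at_extends st0 St L j _ y HL Hj0 Hy). }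
    specialize (Hcand _ _ _ Hc); unfold dim in Hcand; rewrite <- Hbox, Htyp in Hcand; lia.
  - specialize (Hdim j (conj Hj0 Hjlt) Hji); unfold dim in Hdim; rewrite Htyp in Hdim; lia.
Qed.

Lemma chain_inv_add St i d ext x : chain_inv St i (d :: ext) ->
  leftmost_in_box St i (typ St i ++ [d]) x ->
  chain_inv (add_box St (Box (typ St i ++ [d]) x (Some i))) (length (boxes St)) ext.
Proof.
  intros C Hleft; pose proof (chain_inv_no_room St i d ext C) as Hroom.
  destruct C as [Ht [L HL] HP Hold [Hi0 Hi] Hemp Hpar Hdim Hcand Hm].
  set (nb := Box (typ St i ++ [d]) x (Some i)).
  assert (Hnew : dim (add_box St nb) (length (boxes St)) = S (dim St i)).
  { unfold dim; rewrite box_at_add_box_new; simpl; rewrite length_app; simpl; lia. }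
  split; rewrite ?length_add_box.
  - apply tree_inv_add_child; auto.
    intros _ j Hji Htyp Hj; exact (Hroom j Hji Htyp (near_empty_has_child _ _ Hj)).
  - exists (L ++ [nb]); simpl; rewrite HL, app_assoc; reflexivity.
  - exact HP.
  - intros k Hk [b [Hb Hpb]]; apply in_add_box in Hb as [Hb | ->].
    + apply Hold; [exact Hk | exists b; auto].
    + injection Hpb as <-; lia.
  - lia.
  - intros [b [Hb Hpb]]; apply in_add_box in Hb as [Hb | ->].
    + pose proof (parent_lt St Ht b _ Hb Hpb); lia.
    + injection Hpb as ->; lia.
  - intros k Hk Hkn; destruct (Nat.eq_dec k i) as [-> | Hki].
    + exists nb; split; [apply in_add_box; auto | reflexivity].
    + apply (has_child_extends St _ [nb]); [reflexivity | apply Hpar; auto; lia].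
  - intros k Hk Hkn; rewrite Hnew; unfold dim; rewrite box_at_add_box_old by lia.
    destruct (Nat.eq_dec k i) as [-> | Hki]; [lia |].
    specialize (Hdim k ltac:(lia) Hki); unfold dim in Hdim; lia.
  - intros k d' e Hc; rewrite Hnew; specialize (Hcand k d' e Hc); lia.
  - rewrite box_at_add_box_new; simpl; rewrite <- app_assoc; exact Hm.
Qed.

Lemma chain_inv_chain St i ext St' j : chain St i ext St' j ->
  chain_inv St i ext -> chain_inv St' j [].
Proof.
  induction 1 as [| St i d ext x St' j Hleft _ IH]; intros C; [exact C |].
  apply IH, chain_inv_add; assumption.
Qed.

Lemma chain_inv_start b ext : tree_inv (add_box st0 b) ->
  (forall p, bparent b = Some p -> (p < n0)%nat /\ no_piece_in st0 p) ->
  (forall k d e, candidate st0 P k d e -> (dim st0 k < length (btyp b))%nat) ->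
  matches (btyp b ++ ext) P ->
  chain_inv (add_box st0 b) n0 ext.
Proof.
  intros Ht Hb Hcand Hm.
  assert (Hdimb : dim (add_box st0 b) n0 = length (btyp b))
    by (unfold dim; rewrite box_at_add_box_new; reflexivity).
  split; rewrite ?length_add_box.
  - exact Ht.
  - exists [b]; reflexivity.
  - reflexivity.
  - intros k Hk [b' [Hb' Hpb']]; apply in_add_box in Hb' as [Hb' | ->].
    + apply (pi_no_piece_iff st0 Hst0 k Hk); exists b'; auto.
    + exact (proj2 (Hb k Hpb')).
  - lia.
  - intros [b' [Hb' Hpb']]; apply in_add_box in Hb' as [Hb' | ->].
    + pose proof (parent_lt st0 (pi_tree st0 Hst0) b' _ Hb' Hpb'); lia.
    + pose proof (proj1 (Hb _ Hpb')); lia.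
  - intros k Hk Hkn; lia.
  - intros k Hk Hkn; lia.
  - intros k d e Hc; rewrite Hdimb; exact (Hcand k d e Hc).
  - rewrite box_at_add_box_new; exact Hm.
Qed.

Lemma packing_inv_place St j u : chain_inv St j [] ->
  packing_inv (add_piece St (Placed P u j)).
Proof.
  intros [Ht [L HL] HP Hold [Hj0 Hj] Hemp Hpar _ _ _].
  assert (Hlen : (n0 <= length (boxes St))%nat) by (rewrite HL, length_app; lia).
  assert (Hpieces : forall q, In q (pieces St) -> (pbox q < n0)%nat)
    by (rewrite HP; exact (pi_piece_box st0 Hst0)).
  split; simpl.
  - exact (tree_inv_add_piece St _ Ht).
  - intros k Hk; rewrite no_piece_in_add_piece; simpl.
    destruct (Nat.lt_ge_cases k n0) as [Hk0 | Hk0].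
    + assert (E : no_piece_in St k <-> no_piece_in st0 k)
        by (unfold no_piece_in; rewrite HP; reflexivity).
      rewrite E, (pi_no_piece_iff st0 Hst0 k Hk0); split.
      * intros [Hc _]; exact (has_child_extends st0 St L k HL Hc).
      * intros Hc; split; [apply (pi_no_piece_iff st0 Hst0 k Hk0), Hold | lia]; assumption.
    + destruct (Nat.eq_dec j k) as [<- | Hjk]; [split; [tauto | contradiction] |].
      split; [intros _; apply Hpar; lia |].
      intros _; split; [| exact Hjk].
      intros q Hq; specialize (Hpieces q Hq); lia.
  - intros q Hq; apply in_app_iff in Hq as [Hq | [<- | []]]; simpl; [| exact Hj].
    specialize (Hpieces q Hq); lia.
Qed.

End Allocation.

Lemma chain_cons_inv St i d ext St' j : chain St i (d :: ext) St' j ->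
  exists x, leftmost_in_box St i (typ St i ++ [d]) x /\
    chain (add_box St (Box (typ St i ++ [d]) x (Some i))) (length (boxes St)) ext St' j.
Proof. intros H; inversion H; subst; eauto. Qed.

Lemma packing_inv_init : packing_inv init_state.
Proof.
  split; [exact tree_inv_init | simpl; lia | simpl; tauto].
Qed.

Lemma packing_inv_step st P st' : packing_inv st -> step st P st' -> packing_inv st'.
Proof.
  intros Hst Hstep; pose proof (pi_tree st Hst) as Ht.
  destruct Hstep as [i d ext St' j u Hcand Hmax Hchain _ | x ext St' j u Hnone _ Hm Hchain _].
  - apply chain_cons_inv in Hchain as [x [Hleft Hrest]].
    destruct Hcand as [Hi [Hnp [Hm _]]].
    apply (packing_inv_place st P Hst), (chain_inv_chain st P _ _ _ _ _ Hrest).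
    apply chain_inv_start; [exact Hst | | | |]; simpl.
    + apply tree_inv_add_child; auto.
      intros Hno; exfalso; apply Hno, (pi_no_piece_iff st Hst i Hi), Hnp.
    + intros p Hp; injection Hp as <-; auto.
    + intros k d' e Hk; specialize (Hmax k d' e Hk); rewrite length_app; simpl.
      unfold dim; lia.
    + rewrite <- app_assoc; exact Hm.
  - apply (packing_inv_place st P Hst), (chain_inv_chain st P _ _ _ _ _ Hchain).
    apply chain_inv_start; [exact Hst | | | |]; simpl.
    + apply tree_inv_add_root; auto.
    + discriminate.
    + intros k d e Hk; exfalso; exact (Hnone k d e Hk).
    + exact Hm.
Qed.

Lemma packing_inv_reachable st : reachable st -> packing_inv st.
Proof.
  induction 1; [exact packing_inv_init | eapply packing_inv_step; eassumption].
Qed.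

Theorem lemma16 :
  forall st : state, reachable st ->
  forall (T : btype) (I : list nat),
    NoDup I ->
    (forall i, In i I ->
       (i < length (boxes st))%nat /\ btyp (box_at st i) = T /\ near_empty st i) ->
    (length I <= 2)%nat.
Proof.
  intros st Hreach T I Hnodup HI.
  pose proof (pi_tree st (packing_inv_reachable st Hreach)) as Ht.
  assert (Hopp : forall i j ci cj, In i I -> In j I -> i <> j ->
            child_dir st i ci -> child_dir st j cj -> opposite ci cj).
  { intros i j ci cj Hi Hj Hij; destruct (HI i Hi) as [_ [Ti Ni]], (HI j Hj) as [_ [Tj Nj]].
    apply (near_empty_opposite st Ht i j); congruence. }
  assert (Hdir : forall i, In i I -> exists c, child_dir st i c)
    by (intros i Hi; apply near_empty_child_dir; [exact Ht | apply HI, Hi]).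
  destruct I as [| a [| b [| c I]]]; simpl; try lia; exfalso.
  apply NoDup_cons_iff in Hnodup as [Ha Hnodup]; apply NoDup_cons_iff in Hnodup as [Hb _].
  destruct (Hdir a ltac:(simpl; tauto)) as [ca Hca], (Hdir b ltac:(simpl; tauto)) as [cb Hcb],
    (Hdir c ltac:(simpl; tauto)) as [cc Hcc].
  assert (Hac : a <> c) by (intros ->; simpl in Ha; tauto).
  assert (Hbc : b <> c) by (intros ->; simpl in Hb; tauto).
  assert (Hab : a <> b) by (intros ->; simpl in Ha; tauto).
  apply (not_pairwise_opposite3 ca cb cc);
    [apply (Hopp a b) | apply (Hopp a c) | apply (Hopp b c)]; first [assumption | simpl; tauto].
Qed.
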